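(* Let $\nu=(\nu_1,\ldots,\nu_p)$ be a vector of $p$-orthogonality for $\{P_n\}$, and let $\{P^{(p)}_n\}$ be the sequence associated with the Darboux transformation $J^{(p)}$ of some Darboux factorization of $J-CI$. Then $\nu^{(p)}=\big((z-C)\nu_1,(z-C)\nu_2,\ldots,(z-C)\nu_p\big)$ is a vector of $p$-orthogonality for $\{P^{(p)}_n\}$.
   Context: Fix $p\in\mathbb{N}$. Let $J=(a_{n,m})_{n,m\ge0}$ be an infinite matrix with $a_{n,n+1}=1$, $a_{n,m}=0$ for $m>n+1$ or $m<n-p$, and $a_{n+p,n}\neq0$ for all $n\ge0$. Define polynomials by $P_{-p}=\cdots=P_{-1}=0$, $P_0\equiv1$, $P_{n+1}(z)=(z-a_{n,n})P_n(z)-\sum_{i=1}^p a_{n,n-i}P_{n-i}(z)$ for $n\ge0$. Fix $C\in\mathbb{C}$ with $P_n(C)\neq0$ for all $n\ge1$. A Darboux factorization of $J-CI$ is a factorization $J-CI=L^{(1)}L^{(2)}\cdots L^{(p)}U$ where, indexing rows and columns by $1,2,\ldots$, $U$ is upper bidiagonal with $U_{k,k}=\gamma_{(k-1)(p+1)+1}$, $U_{k,k+1}=1$, and for $j=1,\ldots,p$, $L^{(j)}$ is lower bidiagonal with ones on the diagonal and $L^{(j)}_{k+1,k}=\gamma_{(k-1)(p+1)+j+1}\neq0$ for all $k\ge1$. The Darboux transformation $J^{(p)}=CI+UL^{(1)}\cdots L^{(p)}$ is lower Hessenberg with ones on the superdiagonal, and $\{P^{(p)}_n\}_{n\ge0}$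 is the unique sequence of polynomials with $P^{(p)}_0\equiv1$ such that $v(z)=(P^{(p)}_0(z),P^{(p)}_1(z),\ldots)^T$ satisfies $J^{(p)}v(z)=zv(z)$. A vector of $p$-orthogonality for a sequence of polynomials $\{Q_n\}$ is a vector $(\nu_1,\ldots,\nu_p)$ of linear functionals on polynomials with, for each $r=1,\ldots,p$ and $k=0,1,\ldots$: $\nu_r[z^kQ_n]=0$ for all $n\ge kp+r$, and $\nu_r[z^kQ_{kp+r-1}]\neq0$. For a functional $\mu$, $(z-C)\mu$ is the functional $q\mapsto\mu[(z-C)q]$. *)

(* Infinite matrices are functions nat -> nat -> R (0-indexed). *)
From HB Require Import structures.
From mathcomp Require Import all_boot all_order all_algebra.
Set Implicit Arguments. Unset Strict Implicit. Unset Printing Implicit Defensive.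
Import GRing.Theory.
Local Open Scope ring_scope.

Section Defs.
Variable R : fieldType.

Definition imat := nat -> nat -> R.

(* Entry (i,j) of the product A*B, where the left factor A has no nonzero entry
   beyond the superdiagonal in row i (A i k = 0 for k > i+1); then the sum over
   k < i+2 is the full (finite) matrix product sum.  All left factors used below
   (lower bidiagonal matrices, U, and products U L^(1)...L^(j)) have this shape. *)
Definition hmul (A B : imat) : imat :=
  fun i j => \sum_(k < i.+2) A i k * B k j.

(* Polynomials P_n: P_0 = 1, P_{-p} = ... = P_{-1} = 0,
   P_{n+1} = (z - a_{n,n}) P_n - sum_{i=1}^p a_{n,n-i} P_{n-i}. *)
Fixpoint Pseq (a : imat) (p : nat) (n : nat) : seq {poly R} :=
  match n with
  | 0 => [:: 1]
  | k.+1 => let s := Pseq a p k in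
      rcons s (('X - (a k k)%:P) * nth 0 s k
               - \sum_(1 <= i < p.+1 | (i <= k)%N) (a k (k - i)%N)%:P * nth 0 s (k - i)%N)
  end.

Definition Ppoly (a : imat) (p n : nat) : {poly R} := nth 0 (Pseq a p n) n.

(* Darboux factorization data (0-indexed rows/cols; paper's row k is our k-1).
   U_{k,k} = gamma_{k(p+1)+1}, U_{k,k+1} = 1;
   L^(j)_{k,k} = 1, L^(j)_{k+1,k} = gamma_{k(p+1)+j+1}. *)
Definition Umat (p : nat) (g : nat -> R) : imat :=
  fun i k => if k == i then g (i * p.+1).+1
             else if k == i.+1 then 1 else 0.

Definition Lmat (p : nat) (g : nat -> R) (j : nat) : imat :=
  fun i k => if k == i then 1
             else if i == k.+1 then g (k * p.+1 + j).+1 else 0.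

Definition LU (p : nat) (g : nat -> R) : imat :=
  foldr (fun j M => hmul (Lmat p g j) M) (Umat p g) (iota 1 p).

Definition UL (p : nat) (g : nat -> R) : imat :=
  foldl (fun M j => hmul M (Lmat p g j)) (Umat p g) (iota 1 p).

Definition is_Darboux_factorization (a : imat) (C : R) (p : nat) (g : nat -> R) :=
  (forall k j, (1 <= j <= p)%N -> g (k * p.+1 + j).+1 != 0) /\
  (forall i k, a i k - (if i == k then C else 0) = LU p g i k).

Definition Jp (C : R) (p : nat) (g : nat -> R) : imat :=
  fun i k => (if i == k then C else 0) + UL p g i k.

Definition lin_functional (f : {poly R} -> R) :=
  forall (c : R) (x y : {poly R}), f (c *: x + y) = c * f x + f y.

Definition p_orthogonal (p : nat) (Q : nat -> {poly R}) (nu : nat -> {poly R} -> R) :=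
  (forall r, (1 <= r <= p)%N -> lin_functional (nu r)) /\
  (forall r k, (1 <= r <= p)%N ->
     (forall n, (k * p + r <= n)%N -> nu r ('X^k * Q n) = 0) /\
     nu r ('X^k * Q (k * p + r).-1) != 0).

Definition shift_fun (C : R) (mu : {poly R} -> R) : {poly R} -> R :=
  fun q => mu (('X - C%:P) * q).

End Defs.

From HB Require Import structures.
From mathcomp Require Import all_boot all_order all_algebra.
From mathcomp Require Import zify ring.
Set Implicit Arguments. Unset Strict Implicit. Unset Printing Implicit Defensive.
Import GRing.Theory.
Local Open Scope ring_scope.

(* The vector P = (P_0, P_1, ...) satisfies J P = z P, hence (J - C I) P = (z - C) P.
   Writing J - C I = L U and Q := U P, the vector Q satisfies J^(p) Q = z Q with
   J^(p) = C I + U L, because U L Q = U (L U P) = (z - C) Q.  Both Q and (z - C) P^(p)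
   are eigenvectors of the lower Hessenberg matrix J^(p) with the same first entry,
   so (z - C) P^(p)_n = Q_n = gamma_n P_n + P_(n+1).  Consequently
   (z - C) nu_r [z^k P^(p)_n] = gamma_n nu_r [z^k P_n] + nu_r [z^k P_(n+1)], from which
   the p-orthogonality conditions transfer directly; gamma_n != 0 because evaluating
   at C shows gamma_n P_n(C) = - P_(n+1)(C) != 0. *)

Section MatrixVector.
Variable R : fieldType.
Implicit Types (A B M : imat R) (v w : nat -> {poly R}).

Definition hmulv A v (i : nat) : {poly R} := \sum_(k < i.+2) (A i k)%:P * v k.

Lemma eq_hmulv A v w i : (forall k, v k = w k) -> hmulv A v i = hmulv A w i.
Proof. by move=> vw; apply: eq_bigr => k _; rewrite vw. Qed.

Lemma hmulv_mull A c v i : hmulv A (fun k => c * v k) i = c * hmulv A v i.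
Proof. by rewrite /hmulv mulr_sumr; apply: eq_bigr => k _; rewrite mulrCA. Qed.

Lemma big_ord_vanish n1 n2 (F : nat -> {poly R}) :
  (forall m, (minn n1 n2 <= m)%N -> F m = 0) ->
  \sum_(m < n1) F m = \sum_(m < n2) F m.
Proof.
wlog le12 : n1 n2 / (n1 <= n2)%N.
  move=> wlog_le F0; case: (leqP n1 n2) => [le12 | /ltnW le21].
    exact: wlog_le.
  by symmetry; apply: wlog_le => // m; rewrite minnC; apply: F0.
move=> F0; rewrite -!(big_mkord xpredT) (@big_cat_nat _ _ _ n1 0 n2 _ _ (leq0n n1) le12) /=.
rewrite [X in _ + X]big1_seq ?addr0 // => m /andP [_].
by rewrite mem_iota => /andP [n1m _]; apply: F0; rewrite (minn_idPl le12).
Qed.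

Definition lower_imat A := forall i k, (i < k)%N -> A i k = 0.
Definition hessenberg_imat B := forall k m, (k.+1 < m)%N -> B k m = 0.

Lemma hmulv_hmul_cond A B v i :
  (forall k, (k < i.+2)%N -> (A i k)%:P * \sum_(m < k.+2) (B k m)%:P * v m
      = (A i k)%:P * \sum_(m < i.+2) (B k m)%:P * v m) ->
  hmulv (hmul A B) v i = hmulv A (hmulv B v) i.
Proof.
move=> trunc; rewrite /hmulv /hmul.
transitivity (\sum_(k < i.+2) (A i k)%:P * \sum_(m < i.+2) (B k m)%:P * v m); last first.
  by apply: eq_bigr => k _; rewrite trunc.
under [RHS]eq_bigr do rewrite mulr_sumr.
rewrite [RHS]exchange_big /=; apply: eq_bigr => m _.
rewrite raddf_sum /= mulr_suml; apply: eq_bigr => k _.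
by rewrite polyCM mulrA.
Qed.

Lemma hmulv_hmul_lower A B v i :
  lower_imat B -> hmulv (hmul A B) v i = hmulv A (hmulv B v) i.
Proof.
move=> lowB; apply: hmulv_hmul_cond => k ki; congr (_ * _).
apply: (big_ord_vanish (F := fun m => (B k m)%:P * v m)) => m km.
by rewrite lowB ?polyC0 ?mul0r //; move: km ki; lia.
Qed.

Lemma hmulv_hmul_hessenberg A B v i :
  (forall k, (i < k)%N -> A i k = 0) -> hessenberg_imat B ->
  hmulv (hmul A B) v i = hmulv A (hmulv B v) i.
Proof.
move=> lowAi hessB; apply: hmulv_hmul_cond => k ki.
case: (ltnP i k) => ik; first by rewrite lowAi // !mul0r.
congr (_ * _); apply: (big_ord_vanish (F := fun m => (B k m)%:P * v m)) => m km.
by rewrite hessB ?polyC0 ?mul0r //; move: km ik; lia.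
Qed.

Lemma hmulv_CI_add C M v n :
  hmulv (fun i k => (if i == k then C else 0) + M i k) v n = C%:P * v n + hmulv M v n.
Proof.
rewrite /hmulv; under eq_bigr do rewrite polyCD mulrDl.
rewrite big_split /= 2!big_ord_recr /= eqxx big1 => [|k _].
  by rewrite ifN ?mul0r ?addr0 ?add0r //; lia.
by rewrite ifN ?mul0r //; move: (ltn_ord k) => /=; lia.
Qed.

Lemma hmulv_next M v n : M n n.+1 = 1 ->
  hmulv M v n = \sum_(k < n.+1) (M n k)%:P * v k + v n.+1.
Proof. by move=> sup1; rewrite /hmulv big_ord_recr /= sup1 mul1r. Qed.

(* [hmulv] reads row n only up to column n+1, so with a unit superdiagonal the
   eigen-equation in row n solves for entry n+1. *)
Lemma hessenberg_eigvec_unique M v w :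
  (forall n, M n n.+1 = 1) ->
  (forall n, hmulv M v n = 'X * v n) -> (forall n, hmulv M w n = 'X * w n) ->
  v 0%N = w 0%N -> forall n, v n = w n.
Proof.
move=> sup1 eigv eigw vw0 n; elim/ltn_ind: n => -[//|n] IH.
have next u : hmulv M u n = 'X * u n ->
    u n.+1 = 'X * u n - \sum_(k < n.+1) (M n k)%:P * u k.
  by rewrite hmulv_next // => <-; rewrite addrC addKr.
rewrite (next v (eigv n)) (next w (eigw n)) IH //.
by congr (_ - _); apply: eq_bigr => k _; rewrite IH.
Qed.

End MatrixVector.

Section DarbouxMatrices.
Variables (R : fieldType) (p : nat) (g : nat -> R).
Implicit Types (M : imat R) (v : nat -> {poly R}).

Lemma lower_Lmat j : lower_imat (Lmat p g j).
Proof. by move=> i k ik; rewrite /Lmat !ifN //; lia. Qed.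

Lemma hessenberg_Umat : hessenberg_imat (Umat p g).
Proof. by move=> k m km; rewrite /Umat !ifN //; lia. Qed.

Lemma hessenberg_hmul_Lmat j M :
  hessenberg_imat M -> hessenberg_imat (hmul (Lmat p g j) M).
Proof.
move=> hessM k m km; rewrite /hmul big1 // => l _.
case: (ltnP k l) => kl; first by rewrite lower_Lmat // mul0r.
by rewrite hessM ?mulr0 //; lia.
Qed.

Definition Ls_hmulv (s : seq nat) v : nat -> {poly R} :=
  foldr (fun j w => hmulv (Lmat p g j) w) v s.

Lemma hmulv_LU_gen s :
  hessenberg_imat (foldr (fun j M => hmul (Lmat p g j) M) (Umat p g) s) /\
  forall v i, hmulv (foldr (fun j M => hmul (Lmat p g j) M) (Umat p g) s) v i
              = Ls_hmulv s (hmulv (Umat p g) v) i.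
Proof.
elim: s => [|j s [hess_s IH]] /=; first by split => //; exact: hessenberg_Umat.
split=> [|v i]; first exact: hessenberg_hmul_Lmat.
rewrite hmulv_hmul_hessenberg //; last by move=> k; apply: lower_Lmat.
by apply: eq_hmulv => k; rewrite IH.
Qed.

Lemma hmulv_LU v i : hmulv (LU p g) v i = Ls_hmulv (iota 1 p) (hmulv (Umat p g) v) i.
Proof. exact: (hmulv_LU_gen _).2. Qed.

Lemma hmulv_UL_gen s M v i :
  hmulv (foldl (fun M j => hmul M (Lmat p g j)) M s) v i = hmulv M (Ls_hmulv s v) i.
Proof.
elim: s M v => [|j s IH] M v //=.
by rewrite IH hmulv_hmul_lower //; exact: lower_Lmat.
Qed.

Lemma hmulv_Jp C v n :
  hmulv (Jp C p g) v n = C%:P * v n + hmulv (Umat p g) (Ls_hmulv (iota 1 p) v) n.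
Proof. by rewrite hmulv_CI_add /UL hmulv_UL_gen. Qed.

Lemma hmulv_Umat v n : hmulv (Umat p g) v n = (g (n * p.+1).+1)%:P * v n + v n.+1.
Proof.
rewrite hmulv_next /Umat; last by rewrite ifN ?eqxx //; lia.
rewrite big_ord_recr /= eqxx big1 ?add0r // => k _.
by rewrite !ifN ?mul0r //; move: (ltn_ord k) => /=; lia.
Qed.

Lemma LU00 : LU p g 0%N 0%N = g 1%N.
Proof.
rewrite /LU; elim: (iota 1 p) => [|j s IH] /=; first by rewrite /Umat eqxx.
by rewrite /hmul 2!big_ord_recr big_ord0 /= IH /Lmat /= mul1r mul0r add0r addr0.
Qed.

Lemma Jp_sup C n : Jp C p g n n.+1 = 1.
Proof.
have UL_sup s M : foldl (fun M j => hmul M (Lmat p g j)) M s n n.+1 = M n n.+1.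
  elim: s M => [|j s IH] M //=; rewrite IH /hmul big_ord_recr /= big1.
    by rewrite /Lmat eqxx mulr1 add0r.
  by move=> k _; rewrite lower_Lmat ?mulr0 //= ltnS.
by rewrite /Jp /UL UL_sup /Umat eqxx !ifN ?add0r //; lia.
Qed.

End DarbouxMatrices.

Section Ppoly.
Variables (R : fieldType) (p : nat) (a : imat R).

Lemma size_Pseq n : size (Pseq a p n) = n.+1.
Proof. by elim: n => [|n IH] //=; rewrite size_rcons IH. Qed.

Lemma nth_Pseq n m : (m <= n)%N -> nth 0 (Pseq a p n) m = Ppoly a p m.
Proof.
elim: n => [|n IH]; first by rewrite leqn0 => /eqP ->.
rewrite leq_eqVlt => /orP [/eqP -> // | mn].
by rewrite /= nth_rcons size_Pseq mn IH.
Qed.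

Lemma PpolyS n : Ppoly a p n.+1 = ('X - (a n n)%:P) * Ppoly a p n
   - \sum_(1 <= i < p.+1 | (i <= n)%N) (a n (n - i)%N)%:P * Ppoly a p (n - i)%N.
Proof.
rewrite /Ppoly /= nth_rcons size_Pseq ltnn eqxx nth_Pseq //.
by congr (_ - _); apply: eq_bigr => i _; rewrite nth_Pseq // leq_subr.
Qed.

Lemma hmulv_Ppoly (a_sup : forall n, a n n.+1 = 1)
  (a_low : forall n m, (m + p < n)%N -> a n m = 0) n :
  hmulv a (Ppoly a p) n = 'X * Ppoly a p n.
Proof.
rewrite hmulv_next // big_ord_recr /= PpolyS.
set f := fun k => (a n k)%:P * Ppoly a p k.
suff -> : \sum_(k < n) f k = \sum_(1 <= i < p.+1 | (i <= n)%N) f (n - i)%N.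
  by rewrite /f mulrBl; ring.
rewrite -(big_mkord xpredT f) big_nat_rev /= add0n big_add1 /=.
rewrite (big_nat_widen _ _ _ _ _ (leq_addr p n)).
rewrite [RHS](big_nat_widen _ _ _ _ _ (leq_addl n p)).
rewrite [LHS]big_mkcond [RHS]big_mkcond; apply: eq_bigr => i _ /=.
case: (ltnP i n) => hin; case: (ltnP i p) => hip //=.
by rewrite /f a_low ?mul0r //; lia.
Qed.

End Ppoly.

Section DarbouxTransform.
Variables (R : fieldType) (p : nat) (a : imat R) (C : R) (g : nat -> R).
Hypothesis a_sup : forall n, a n n.+1 = 1.
Hypothesis a_low : forall n m, (m + p < n)%N -> a n m = 0.
Hypothesis factorization : forall i k, a i k - (if i == k then C else 0) = LU p g i k.

Lemma hmulv_LU_Ppoly n : hmulv (LU p g) (Ppoly a p) n = ('X - C%:P) * Ppoly a p n.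
Proof.
have a_split : hmulv a (Ppoly a p) n = C%:P * Ppoly a p n + hmulv (LU p g) (Ppoly a p) n.
  by rewrite -hmulv_CI_add; apply: eq_bigr => j _; rewrite -factorization addrC subrK.
by move: a_split; rewrite hmulv_Ppoly // mulrBl => ->; rewrite addrC addKr.
Qed.

Lemma hmulv_Jp_Umat_Ppoly n :
  hmulv (Jp C p g) (hmulv (Umat p g) (Ppoly a p)) n
  = 'X * hmulv (Umat p g) (Ppoly a p) n.
Proof.
have LUP k : Ls_hmulv p g (iota 1 p) (hmulv (Umat p g) (Ppoly a p)) k
    = ('X - C%:P) * Ppoly a p k.
  by rewrite -hmulv_LU hmulv_LU_Ppoly.
by rewrite hmulv_Jp (eq_hmulv _ _ LUP) hmulv_mull mulrBl addrC subrK.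
Qed.

Lemma hmulv_Umat_Ppoly0 : hmulv (Umat p g) (Ppoly a p) 0%N = 'X - C%:P.
Proof.
rewrite hmulv_Umat mul0n PpolyS big1_seq => [|i /andP [i_le0]]; last first.
  by rewrite mem_iota; lia.
have := factorization 0 0; rewrite LU00 eqxx => <-.
by rewrite /Ppoly /= polyCB; ring.
Qed.

End DarbouxTransform.

Lemma p_orthogonal_shift (R : fieldType) (p : nat) (C : R) (c : nat -> R)
  (P Pp : nat -> {poly R}) (nu : nat -> {poly R} -> R) :
  p_orthogonal p P nu -> (forall n, (P n.+1).[C] != 0) ->
  (forall n, ('X - C%:P) * Pp n = (c n)%:P * P n + P n.+1) ->
  p_orthogonal p Pp (fun r => shift_fun C (nu r)).
Proof.
move=> [nu_lin nu_orth] PC_neq0 shiftPp.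
have c_neq0 n : c n != 0.
  apply: contra (PC_neq0 n) => /eqP c0.
  have := congr1 (horner^~ C) (shiftPp n).
  by rewrite c0 !hornerE subrr mul0r => <-.
split=> [r r_range x y z | r k r_range].
  by rewrite /shift_fun mulrDr -scalerAr nu_lin.
have [orth nondeg] := nu_orth r k r_range.
have shift_nu n : shift_fun C (nu r) ('X^k * Pp n)
    = c n * nu r ('X^k * P n) + nu r ('X^k * P n.+1).
  by rewrite /shift_fun mulrCA shiftPp mulrDr mulrCA mul_polyC nu_lin.
split=> [n n_ge | ].
  by rewrite shift_nu !orth ?mulr0 ?addr0 //; lia.
rewrite shift_nu (orth (k * p + r).-1.+1) ?addr0; last by lia.
exact: mulf_neq0.
Qed.

Theorem lemma4 (R : fieldType) (p : nat) (a : imat R) (C : R)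
  (ha_sup : forall n, a n n.+1 = 1)
  (ha_up : forall n m, (n.+1 < m)%N -> a n m = 0)
  (ha_low : forall n m, (m + p < n)%N -> a n m = 0)
  (ha_diag : forall n, a (n + p)%N n != 0)
  (hC : forall n, (1 <= n)%N -> (Ppoly a p n).[C] != 0)
  (nu : nat -> {poly R} -> R)
  (hnu : p_orthogonal p (Ppoly a p) nu)
  (g : nat -> R) (hD : is_Darboux_factorization a C p g)
  (Pp : nat -> {poly R})
  (hPp0 : Pp 0%N = 1)
  (hPp : forall n, \sum_(m < n.+2) (Jp C p g n m)%:P * Pp m = 'X * Pp n) :
  p_orthogonal p Pp (fun r => shift_fun C (nu r)).
Proof.
(* ha_up is built into [hmulv], which ignores entries right of the superdiagonal. *)
have [_ factorization] := hD.
have shiftPp n : ('X - C%:P) * Pp n = hmulv (Umat p g) (Ppoly a p) n.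
  apply: (hessenberg_eigvec_unique (v := fun n => ('X - C%:P) * Pp n)) => {n} [n|n|n|].
  - exact: Jp_sup.
  - by rewrite hmulv_mull [hmulv _ _ _]hPp mulrCA.
  - exact: hmulv_Jp_Umat_Ppoly ha_sup ha_low factorization n.
  - by rewrite hPp0 mulr1 (hmulv_Umat_Ppoly0 factorization).
apply: (p_orthogonal_shift (c := fun n => g (n * p.+1).+1) hnu) => [n | n].
  exact: hC.
by rewrite shiftPp hmulv_Umat.
Qed.
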